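(* Let $f:N\to M$ be an $\mathcal L$-pure monomorphism with $M$ strict $\mathcal L$-atomic and $N\in\mathcal L$. Then $f$ is a locally split monomorphism: for every finite tuple $\bar n$ in $N$ there is a homomorphism $g:M\to N$ with $gf(\bar n)=\bar n$. If moreover $N$ is finitely generated, then $f$ is a split monomorphism. In particular, an $\mathcal L$-pure submodule of a strict $\mathcal L$-atomic module which belongs to $\mathcal L$ is a locally split submodule, and a direct summand if it is also finitely generated.
   Context: $R$ is a ring with $1$; modules are left $R$-modules; $\mathcal L$ is a nonempty class of modules. pp formulas, $\phi(M)$ as usual; $\phi\le_{\mathcal L}\psi$ means $\phi(L)\subseteq\psi(L)$ for all $L\in\mathcal L$. A homomorphism $f:A\to B$ is an $\mathcal L$-pure monomorphism if for every tuple $\bar a$ in $A$ and pp formula $\phi$ with $f(\bar a)\in\phi(B)$ there is a pp formula $\psi\le_{\mathcal L}\phi$ with $\bar a\in\psi(A)$. $(M,\bar m)$ is an $\mathcal L$-free realization of a pp formula $\phi$ if $\bar m\in\phi(M)$ and for every $L\in\mathcal L$ and $\bar c\in\phi(L)$ there is a homomorphism $M\to L$ sending $\bar m$ to $\bar c$. $M$ is strict $\mathcal L$-atomic if every finite tuple in $M$ is an $\mathcal L$-free realization of some pp formula. *)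

From HB Require Import structures.
From mathcomp Require Import all_boot all_algebra.
Set Implicit Arguments. Unset Strict Implicit. Unset Printing Implicit Defensive.
Import GRing.Theory.
Local Open Scope ring_scope.

(* R : a ring with 1 (possibly noncommutative); modules are left R-modules,
   i.e. [lmodType R]; a class of modules is a predicate on [lmodType R]. *)

(* A pp formula in n free variables x_0..x_{n-1}:
     exists y_0..y_{m-1}, /\_{i<k} ( sum_j A i j * x_j + sum_l B i l * y_l = 0 ). *)
Record ppf (R : nzRingType) (n : nat) := PPF {
  ppf_m : nat;
  ppf_k : nat;
  ppf_A : 'M[R]_(ppf_k, n);
  ppf_B : 'M[R]_(ppf_k, ppf_m) }.

Definition pp_sat (R : nzRingType) (n : nat) (phi : ppf R n)
  (M : lmodType R) (x : 'I_n -> M) : Prop :=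
  exists y : 'I_(ppf_m phi) -> M,
    forall i : 'I_(ppf_k phi),
      \sum_(j < n) ppf_A phi i j *: x j
      + \sum_(l < ppf_m phi) ppf_B phi i l *: y l = 0.

Definition pp_leL (R : nzRingType) (cL : lmodType R -> Prop) (n : nat)
  (phi psi : ppf R n) : Prop :=
  forall (L : lmodType R), cL L ->
    forall x : 'I_n -> L, pp_sat phi x -> pp_sat psi x.

Definition is_hom (R : nzRingType) (A B : lmodType R) (f : A -> B) : Prop :=
  linear f.

Definition L_pure_mono (R : nzRingType) (cL : lmodType R -> Prop)
  (A B : lmodType R) (f : A -> B) : Prop :=
  is_hom f /\
  forall (n : nat) (a : 'I_n -> A) (phi : ppf R n),
    pp_sat phi (fun i => f (a i)) ->
    exists psi : ppf R n, pp_leL cL psi phi /\ pp_sat psi a.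

Definition L_free_realization (R : nzRingType) (cL : lmodType R -> Prop)
  (n : nat) (phi : ppf R n) (M : lmodType R) (m : 'I_n -> M) : Prop :=
  pp_sat phi m /\
  forall (L : lmodType R), cL L ->
    forall c : 'I_n -> L, pp_sat phi c ->
      exists h : M -> L, is_hom h /\ forall i, h (m i) = c i.

Definition strict_L_atomic (R : nzRingType) (cL : lmodType R -> Prop)
  (M : lmodType R) : Prop :=
  forall (n : nat) (m : 'I_n -> M),
    exists phi : ppf R n, L_free_realization cL phi m.

Definition finitely_generated (R : nzRingType) (M : lmodType R) : Prop :=
  exists (n : nat) (g : 'I_n -> M),
    forall x : M, exists r : 'I_n -> R, x = \sum_(i < n) r i *: g i.

From mathcomp Require Import all_boot all_algebra.
Local Open Scope ring_scope.
Set Implicit Arguments. Unset Strict Implicit.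
Import GRing.Theory.

(* Given a tuple nb in N, the tuple f(nb) is an L-free realization of some pp
   formula phi, because M is strict L-atomic.  Purity of f yields psi <=_L phi
   with nb in psi(N); since N belongs to L, this gives nb in phi(N).  Freeness
   of the realization then provides g : M -> N sending f(nb) to nb.
   If N is generated by a finite tuple, applying this to the generators gives
   a homomorphism g with g o f fixing every generator; since g o f is linear,
   it fixes every linear combination of them, i.e. all of N. *)

Section Homomorphisms.
Variable R : nzRingType.

Lemma hom_lincomb (A B : lmodType R) (h : A -> B) (hh : is_hom h)
    (n : nat) (r : 'I_n -> R) (v : 'I_n -> A) :
  h (\sum_(i < n) r i *: v i) = \sum_(i < n) r i *: h (v i).
Proof.
have hsl := GRing.semilinear_linear hh.
have [h0 _] := GRing.nmod_morphism_semilinear hsl.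
rewrite (big_morph h hsl.2 h0); apply: eq_bigr => i _; exact: hsl.1.
Qed.

Lemma hom_comp (A B C : lmodType R) (g : B -> C) (h : A -> B) :
  is_hom g -> is_hom h -> is_hom (g \o h).
Proof. by move=> hg hh a u v /=; rewrite hh hg. Qed.

Lemma hom_fixing_generators (A : lmodType R) (e : A -> A) (he : is_hom e)
    (n : nat) (gen : 'I_n -> A) :
  (forall x : A, exists r : 'I_n -> R, x = \sum_(i < n) r i *: gen i) ->
  (forall i, e (gen i) = gen i) -> forall x : A, e x = x.
Proof.
move=> hgen hfix x; have [r ->] := hgen x.
by rewrite hom_lincomb //; apply: eq_bigr => i _; rewrite hfix.
Qed.

End Homomorphisms.

Section PureIntoAtomic.
Variables (R : nzRingType) (cL : lmodType R -> Prop).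
Variables (N M : lmodType R) (f : N -> M).
Hypotheses (hf : L_pure_mono cL f) (hN : cL N).

Lemma pure_reflects_pp (n : nat) (nb : 'I_n -> N) (phi : ppf R n) :
  pp_sat phi (fun i => f (nb i)) -> pp_sat phi nb.
Proof.
move=> sat; have [psi [psi_le_phi sat_psi]] := hf.2 n nb phi sat.
exact: psi_le_phi N hN nb sat_psi.
Qed.

Lemma pure_into_atomic_locally_split (hM : strict_L_atomic cL M)
    (n : nat) (nb : 'I_n -> N) :
  exists g : M -> N, is_hom g /\ forall i, g (f (nb i)) = nb i.
Proof.
have [phi [sat free]] := hM n (fun i => f (nb i)).
exact: free N hN nb (pure_reflects_pp sat).
Qed.

End PureIntoAtomic.

Theorem lemma2p4 (R : nzRingType) (cL : lmodType R -> Prop)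
  (cL_nonempty : exists L : lmodType R, cL L)
  (N M : lmodType R) (f : N -> M)
  (hf : L_pure_mono cL f) (hM : strict_L_atomic cL M) (hN : cL N) :
  (forall (n : nat) (nb : 'I_n -> N),
     exists g : M -> N, is_hom g /\ forall i, g (f (nb i)) = nb i) /\
  (finitely_generated N ->
     exists g : M -> N, is_hom g /\ forall x : N, g (f x) = x).
Proof.
have local_split := pure_into_atomic_locally_split hf hN hM.
split=> // [[n [gen hgen]]].
have [g [hg fix_gen]] := local_split n gen.
exists g; split=> //.
exact: (hom_fixing_generators (hom_comp hg hf.1) hgen fix_gen).
Qed.
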